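(* Let $n\ge1$, let $b_1,\dots,b_n\ge2$ be integers and $\varepsilon_1,\dots,\varepsilon_n\in\{+1,-1\}$, and let $x=[\langle b_j:\varepsilon_j\rangle_{j=1}^n]$. Then for every $z\in\mathcal{F}_n(x)$ and every $k$ with $0\le k\le n-1$, \[\frac45\cdot\frac1{b_{k+1}}\le|G^{\circ k}(z)|\le\frac43\cdot\frac1{b_{k+1}},\] and $\arg G^{\circ k}(z)\in[-\pi/4,\pi/4]$ if $\operatorname{Re}G^{\circ k}(z)>0$, while $\arg G^{\circ k}(z)\in[3\pi/4,5\pi/4]$ if $\operatorname{Re}G^{\circ k}(z)<0$.
   Context: For $x\in\mathbb{R}$, $[x]$ denotes the closest integer to $x$ with the convention $x\in([x]-1/2,[x]+1/2]$ for $x>0$, $x\in[[x]-1/2,[x]+1/2)$ for $x<0$, and $[0]=0$. Define $G(z)=-1/z-[\operatorname{Re}(-1/z)]$ for $z\in\mathbb{C}\setminus\{0\}$. For integers $b_j\ge2$ and signs $\varepsilon_j$, $[\langle b_j:\varepsilon_j\rangle_{j=1}^n]=\cfrac{\varepsilon_1}{b_1+\cfrac{\varepsilon_2}{\ddots+\cfrac{\varepsilon_n}{b_n}}}$. For an integer $b\ge2$ and $s\in\{\pm1\}$ let $D(s/b)=\{-1/w: w\in B(-sb,1/2)\}$, the open round disk (symmetric about $\mathbb{R}$) containing $s/b$, on which $G$ is a holomorphic bijection onto $B(0,1/2)$. For $x=[\langle b_j:\varepsilon_j\rangle_{j=1}^n]$ let $s_k\in\{\pm1\}$ be the sign of the real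 number $G^{\circ(k-1)}(x)$, $1\le k\le n$, and let $\mathcal{F}_n(x)$ be the set of $z$ such that for every $0\le k\le n-1$, $G^{\circ k}(z)$ is defined and lies in $D(s_{k+1}/b_{k+1})$ (the round disk of $\mathcal{F}_n$ about $x$ on which $G^{\circ n}$ maps into $B(0,1/2)$). *)

From Stdlib Require Import Reals.
From Coquelicot Require Import Coquelicot.
Open Scope R_scope.

(* Nearest integer [x]:  x>0: x in ([x]-1/2,[x]+1/2], i.e. [x] = ceil(x-1/2);
   x<0: x in [[x]-1/2,[x]+1/2), i.e. [x] = floor(x+1/2);  [0] = 0.
   Stdlib: up r = the least integer > r, so floor r = up r - 1 and
   ceil r = 1 - up (-r). *)
Definition nint (x : R) : Z :=
  if Rlt_dec 0 x then (1 - up (/2 - x))%Z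
  else if Rlt_dec x 0 then (up (x + /2) - 1)%Z
  else 0%Z.

(* G(z) = -1/z - [Re(-1/z)]  (only meaningful for z <> 0). *)
Definition G (z : C) : C :=
  Cminus (Copp (Cinv z)) (RtoC (IZR (nint (Re (Copp (Cinv z)))))).

Fixpoint Giter (k : nat) (z : C) : C :=
  match k with O => z | S k' => G (Giter k' z) end.

Definition Gdefined (k : nat) (z : C) : Prop :=
  forall j, (j < k)%nat -> Giter j z <> RtoC 0.

(* [<b_j : eps_j>_{j=m}^{m+len-1}] ; the paper's x is cfrac b eps 1 n. *)
Fixpoint cfrac_from (b : nat -> nat) (eps : nat -> R) (m len : nat) : R :=
  match len with
  | O => 0
  | S len' => eps m / (INR (b m) + cfrac_from b eps (S m) len')
  end.

Definition cfrac (b : nat -> nat) (eps : nat -> R) (n : nat) : R :=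
  cfrac_from b eps 1 n.

(* sign of a real number, valued in {1,-1} (it is only applied to
   nonzero reals in the statement). *)
Definition rsign (r : R) : R := if Rlt_dec 0 r then 1 else -1.

(* D(s/b) = { -1/w : w in B(-s b, 1/2) } *)
Definition inD (s : R) (b : nat) (z : C) : Prop :=
  exists w : C, Cmod (Cminus w (RtoC (- s * INR b))) < /2 /\ z = Copp (Cinv w).

Definition in_Fn (b : nat -> nat) (eps : nat -> R) (n : nat) (z : C) : Prop :=
  let x := cfrac b eps n in
  forall k, (k <= n - 1)%nat ->
    Gdefined k z /\
    inD (rsign (Re (Giter k (RtoC x)))) (b (S k)) (Giter k z).

Definition arg_in (w : C) (a c : R) : Prop :=
  exists t, a <= t <= c /\ w = (Cmod w * cos t, Cmod w * sin t).

(* Write z = -1/w with |w + s b| < 1/2.  Then |w| lies within 1/2 of b >= 2, so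
   |z| = 1/|w| lies between 1/(b + 1/2) >= 4/(5b) and 1/(b - 1/2) <= 4/(3b).
   Moreover |Im w| < 1/2 < 3/2 <= b - 1/2 < |Re w|, and since -1/w = -conj(w)/|w|^2
   the same inequality |Im z| <= |Re z| holds for z, which confines arg z to the
   quarter-planes around the real axis. *)
From Stdlib Require Import Reals Lra Lia.
From Coquelicot Require Import Coquelicot.
Open Scope R_scope.

Lemma atan_le_PI4 (y : R) : Rabs y <= 1 -> - PI / 4 <= atan y <= PI / 4.
Proof.
  intros Hy.
  apply Rabs_le_between in Hy.
  assert (Hm1 : atan (-1) = - (PI / 4))
    by (replace (-1) with (- (1)) by ring; rewrite atan_opp, atan_1; reflexivity).
  split.
  - destruct (Req_dec y (-1)) as [-> | Hne]; [lra |].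
    pose proof (atan_increasing (-1) y ltac:(lra)); lra.
  - destruct (Req_dec y 1) as [-> | Hne]; [rewrite atan_1; lra |].
    pose proof (atan_increasing y 1 ltac:(lra)); rewrite atan_1 in *; lra.
Qed.

Lemma arg_in_right_quarter (p q : R) :
  0 < p -> Rabs q <= p -> arg_in (p, q) (- PI / 4) (PI / 4).
Proof.
  intros Hp Hq.
  exists (atan (q / p)); split.
  - apply atan_le_PI4.
    unfold Rdiv; rewrite Rabs_mult, Rabs_inv, (Rabs_pos_eq p) by lra.
    apply (Rmult_le_reg_r p); [lra |].
    field_simplify; lra.
  - assert (Hpolar : Cmod (p, q) = p * sqrt (1 + (q / p)²)).
    { unfold Cmod; simpl fst; simpl snd.
      rewrite <- (sqrt_pow2 p) at 2 by lra.
      rewrite <- sqrt_mult_alt by (apply pow2_ge_0).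
      f_equal; unfold Rsqr; field; lra. }
    assert (Hsqrt : 0 < sqrt (1 + (q / p)²))
      by (apply sqrt_lt_R0; pose proof (Rle_0_sqr (q / p)); lra).
    rewrite Hpolar, cos_atan, sin_atan.
    f_equal; field; lra.
Qed.

Lemma arg_in_opp (z : C) (a c : R) :
  arg_in (Copp z) a c -> arg_in z (a + PI) (c + PI).
Proof.
  intros [t [Ht Hz]].
  exists (t + PI); split; [lra |].
  rewrite Cmod_opp in Hz.
  rewrite neg_cos, neg_sin.
  destruct z as [x y]; injection Hz as Hx Hy.
  f_equal; simpl in *; lra.
Qed.

Lemma arg_in_left_quarter (p q : R) :
  p < 0 -> Rabs q <= - p -> arg_in (p, q) (3 * PI / 4) (5 * PI / 4).
Proof.
  intros Hp Hq.
  replace (3 * PI / 4) with (- PI / 4 + PI) by field.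
  replace (5 * PI / 4) with (PI / 4 + PI) by field.
  apply arg_in_opp.
  change (Copp (p, q)) with (- p, - q).
  apply arg_in_right_quarter; [lra |].
  rewrite Rabs_Ropp; exact Hq.
Qed.

Lemma arg_in_quarters (z : C) :
  Rabs (Im z) <= Rabs (Re z) ->
  (0 < Re z -> arg_in z (- PI / 4) (PI / 4)) /\
  (Re z < 0 -> arg_in z (3 * PI / 4) (5 * PI / 4)).
Proof.
  destruct z as [p q]; intros Hpq; split; intros Hp; simpl in Hpq, Hp.
  - apply arg_in_right_quarter; [exact Hp |].
    rewrite (Rabs_pos_eq p) in Hpq by lra; exact Hpq.
  - apply arg_in_left_quarter; [exact Hp |].
    rewrite (Rabs_left p) in Hpq by lra; exact Hpq.
Qed.

Lemma Rabs_Im_le_Re_opp_inv (w : C) :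
  Rabs (Im w) <= Rabs (Re w) -> Rabs (Im (Copp (Cinv w))) <= Rabs (Re (Copp (Cinv w))).
Proof.
  destruct w as [a c]; simpl; intros Hac.
  unfold Rdiv; rewrite !Rabs_Ropp, !Rabs_mult, Rabs_Ropp.
  apply Rmult_le_compat_r; [apply Rabs_pos | exact Hac].
Qed.

Section NearCenter.

Variables (s B : R) (w : C).
Hypothesis abs_s : Rabs s = 1.
Hypothesis near_center : Cmod (Cminus w (RtoC (- s * B))) < /2.

Let Rabs_center : Rabs (- s * B) = Rabs B.
Proof. rewrite Rabs_mult, Rabs_Ropp, abs_s; ring. Qed.

Lemma Cmod_near_center : 0 <= B -> B - /2 < Cmod w < B + /2.
Proof.
  intros HB.
  assert (Hc : Cmod (RtoC (- s * B)) = B)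
    by (rewrite Cmod_R, Rabs_center, Rabs_pos_eq; lra).
  pose proof (Cmod_triangle (Cminus w (RtoC (- s * B))) (RtoC (- s * B))) as Hup.
  pose proof (Cmod_triangle w (Copp (Cminus w (RtoC (- s * B))))) as Hlow.
  replace (Cplus (Cminus w (RtoC (- s * B))) (RtoC (- s * B))) with w in Hup by ring.
  replace (Cplus w (Copp (Cminus w (RtoC (- s * B))))) with (RtoC (- s * B)) in Hlow
    by ring.
  rewrite Cmod_opp in Hlow.
  lra.
Qed.

Lemma Rabs_Im_le_Re_near_center : 1 <= B -> Rabs (Im w) <= Rabs (Re w).
Proof.
  intros HB.
  set (d := Cminus w (RtoC (- s * B))) in near_center.
  assert (HIm : Im w = Im d) by (unfold d, Cminus, Cplus, Copp, RtoC, Im; simpl; ring).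
  assert (HRe : Re w = Re d + - s * B) by (unfold d, Cminus, Cplus, Copp, RtoC, Re; simpl; ring).
  pose proof (re_le_Cmod d) as HRed.
  pose proof (Rmax_Cmod d) as HImd.
  pose proof (Rmax_r (Rabs (fst d)) (Rabs (snd d))) as Hmax.
  pose proof (Rabs_triang_inv (- s * B) (- Re d)) as Hrev.
  replace (- s * B - - Re d) with (- s * B + Re d) in Hrev by ring.
  rewrite Rabs_Ropp, Rabs_center, Rabs_pos_eq in Hrev by lra.
  rewrite HIm, HRe, Rplus_comm.
  unfold Im, Re in *; lra.
Qed.

End NearCenter.

Lemma inD_estimates (s : R) (b : nat) (z : C) :
  (s = 1 \/ s = -1) -> (2 <= b)%nat -> inD s b z ->
    4/5 * / INR b <= Cmod z <= 4/3 * / INR b /\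
    (0 < Re z -> arg_in z (- PI / 4) (PI / 4)) /\
    (Re z < 0 -> arg_in z (3 * PI / 4) (5 * PI / 4)).
Proof.
  intros Hs Hb [w [Hw ->]].
  assert (abs_s : Rabs s = 1) by (destruct Hs as [-> | ->]; [apply Rabs_R1 | rewrite Rabs_left; lra]).
  assert (HB : 2 <= INR b) by (apply le_INR in Hb; simpl in Hb; lra).
  split.
  - pose proof (Cmod_near_center s (INR b) w abs_s Hw ltac:(lra)) as Hmod.
    assert (Hw0 : w <> RtoC 0) by (intros ->; rewrite Cmod_0 in Hmod; lra).
    rewrite Cmod_opp, Cmod_inv by exact Hw0.
    split.
    + replace (4/5 * / INR b) with (/ (5/4 * INR b)) by (field; lra).
      apply Rinv_le_contravar; lra.
    + replace (4/3 * / INR b) with (/ (3/4 * INR b)) by (field; lra).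
      apply Rinv_le_contravar; lra.
  - apply arg_in_quarters, Rabs_Im_le_Re_opp_inv.
    apply (Rabs_Im_le_Re_near_center s (INR b)); [exact abs_s | exact Hw | lra].
Qed.

Lemma rsign_cases (r : R) : rsign r = 1 \/ rsign r = -1.
Proof. unfold rsign; destruct (Rlt_dec 0 r); auto. Qed.

Theorem lemma6p4 (n : nat) (b : nat -> nat) (eps : nat -> R) :
  (1 <= n)%nat ->
  (forall j, (1 <= j <= n)%nat -> (2 <= b j)%nat) ->
  (forall j, (1 <= j <= n)%nat -> eps j = 1 \/ eps j = -1) ->
  forall z : C, in_Fn b eps n z ->
  forall k : nat, (k <= n - 1)%nat ->
    4/5 * / INR (b (S k)) <= Cmod (Giter k z) <= 4/3 * / INR (b (S k)) /\
    (0 < Re (Giter k z) -> arg_in (Giter k z) (- PI / 4) (PI / 4)) /\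
    (Re (Giter k z) < 0 -> arg_in (Giter k z) (3 * PI / 4) (5 * PI / 4)).
Proof.
  intros Hn Hb _ z Hz k Hk.
  destruct (Hz k Hk) as [_ HD].
  assert (Hbk : (2 <= b (S k))%nat) by (apply Hb; lia).
  exact (inD_estimates _ _ _ (rsign_cases _) Hbk HD).
Qed.
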